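(* Let $d\ge1$, $X=\{1,\dots,d+1\}$, integers $0\le m_1<\dots<m_{d+1}$, and $P$ the $d$-permutohedron, the convex hull of $\{\sum_i m_{i\pi}v_i:\pi\in\mathfrak S_{d+1}\}\subset\mathbb R^{d+1}$. For $\varnothing\ne J\subsetneq X$ let $a_J$ be the facet of $P$ which is the convex hull of the vertices $\sum_i m_{i\pi}v_i$ with $\sum_{j\in J}m_{j\pi}=m_1+\dots+m_{|J|}$. Then the face monoid of $P$ has a presentation with generators $a_J$ ($\varnothing\ne J\subsetneq X$) and relations $a_J^2=a_J$ for all $J$; $a_Ja_K=a_Ka_J$ for all $J,K$; and $a_Ja_K=a_Ja_Ka_L$ for all $J,K$ with $J\ne J\cap K\ne K$ and all $L$.
   Context: $v_1,\dots,v_{d+1}$ is the standard basis of $\mathbb R^{d+1}$. The face monoid of a polytope is the set of its faces (including the polytope itself and $\varnothing$) under intersection. *)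

From HB Require Import structures.
From mathcomp Require Import all_boot all_order all_algebra all_fingroup.
From mathcomp Require Import boolp classical_sets reals.
Unset Printing Implicit Defensive.
Import Order.TTheory GRing.Theory Num.Theory.
Local Open Scope ring_scope.
Local Open Scope classical_set_scope.

Definition perm_vertex (R : realType) (n : nat) (m : 'I_n -> nat) (s : 'S_n)
  : 'rV[R]_n := \row_i (m (s i))%:R.
Arguments perm_vertex R {n} m s.

Definition conv_hull (R : realType) (n : nat) (I : finType)
  (pts : I -> 'rV[R]_n) (A : {set I}) : set 'rV[R]_n :=
  [set x | exists w : I -> R,
     [/\ (forall i, 0 <= w i), (forall i, i \notin A -> w i = 0),
         \sum_i w i = 1 & x = \sum_i w i *: pts i]].

Definition permutohedron (R : realType) (n : nat) (m : 'I_n -> nat)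
  : set 'rV[R]_n := conv_hull R n _ (perm_vertex R m) [set: {perm 'I_n}]%SET.

Definition facet_a (R : realType) (n : nat) (m : 'I_n -> nat) (J : {set 'I_n})
  : set 'rV[R]_n :=
  conv_hull R n _ (perm_vertex R m)
    [set s : 'S_n | (\sum_(j in J) m (s j) == \sum_(i < n | (i < #|J|)%N) m i)%N].

Definition dotv (R : realType) (n : nat) (c x : 'rV[R]_n) : R :=
  \sum_i c 0 i * x 0 i.
Arguments dotv {R n}.

(* F is a face of P: the intersection of P with a supporting hyperplane
   (c = 0, delta = 0 gives P itself; c = 0, delta = 1 gives the empty face). *)
Definition is_face (R : realType) (n : nat) (P F : set 'rV[R]_n) : Prop :=
  exists (c : 'rV[R]_n) (delta : R),
    (forall x, P x -> dotv c x <= delta) /\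
    F = [set x | P x /\ dotv c x = delta].

Definition gen (n : nat) := {J : {set 'I_n} | (J != finset.set0) && (J != [set: 'I_n]%SET)}.

(* Evaluation of a word in the face monoid (product = intersection, unit = P). *)
Definition eval_word (R : realType) (n : nat) (m : 'I_n -> nat) (w : seq (gen n))
  : set 'rV[R]_n :=
  foldr (fun J S => facet_a R n m (val J) `&` S) (permutohedron R n m) w.

Arguments is_face {R n}.
Arguments eval_word R {n} m w.

Inductive rel_gen (n : nat) : seq (gen n) -> seq (gen n) -> Prop :=
| rel_idem (J : gen n) : rel_gen n [:: J; J] [:: J]
| rel_comm (J K : gen n) : rel_gen n [:: J; K] [:: K; J]
| rel_abs (J K L : gen n) :
    val J != (val J :&: val K)%SET -> (val J :&: val K)%SET != val K ->
    rel_gen n [:: J; K] [:: J; K; L].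

Inductive word_cong (n : nat) : seq (gen n) -> seq (gen n) -> Prop :=
| wc_rel u v l r : rel_gen n l r -> word_cong n (u ++ l ++ v) (u ++ r ++ v)
| wc_refl w : word_cong n w w
| wc_sym w1 w2 : word_cong n w1 w2 -> word_cong n w2 w1
| wc_trans w1 w2 w3 : word_cong n w1 w2 -> word_cong n w2 w3 -> word_cong n w1 w3.
Arguments permutohedron R {n} m.
Arguments facet_a R {n} m J.
Arguments rel_gen {n}.
Arguments word_cong {n}.

From HB Require Import structures.
From mathcomp Require Import all_boot all_order all_algebra all_fingroup.
From mathcomp Require Import boolp classical_sets reals.
From mathcomp Require Import zify ring lra.
Set Implicit Arguments. Unset Strict Implicit. Unset Printing Implicit Defensive.
Import Order.TTheory GRing.Theory Num.Theory.
Local Open Scope ring_scope.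
Local Open Scope classical_set_scope.

(* A vertex of P is indexed by a permutation s, and the linear form
   -sum_{j in J} x_j is at most -(m_1 + ... + m_|J|) on P, with equality at a vertex
   exactly when s maps J onto the |J| smallest positions.  Adding these forms shows that
   a word w evaluates to a face of P, the convex hull of the vertices whose permutation
   maps every letter of w to an initial segment.  This set is empty unless the letters
   form a chain, and for a chain it determines the letters: ordering the coordinates by
   the number of letters missing them, with ties broken against a given set A, yields a
   vertex of the face that maps A to an initial segment only if A is a letter.
   Conversely a linear form c is maximised on P exactly at the permutations ordering the
   coordinates as c does, i.e. at the vertices of the word of sublevel sets of c.
   On the word side, idempotence and commutativity identify words with the same
   letters, and the third relation lets a non-chain word absorb every generator. *)

Section InitialSegments.
Local Open Scope nat_scope.
Variable n : nat.
Implicit Types (J : {set 'I_n}) (s : 'S_n).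

Definition initial_seg k : {set 'I_n} := [set i : 'I_n | i < k].

Lemma card_initial_seg k : k <= n -> #|initial_seg k| = k.
Proof.
move=> le_kn; rewrite -sum1_card.
rewrite (eq_bigl (fun i : 'I_n => true && (i < k))) => [|i]; last by rewrite inE.
by rewrite (big_ord_narrow_cond (P := xpredT)) //= sum_nat_const card_ord muln1.
Qed.

Lemma sum_lt_dominated (T : finType) (f : T -> nat) (A B : {set T}) :
  #|A| = #|B| -> B != finset.set0 -> (forall a b, a \in A -> b \in B -> f b < f a) ->
  \sum_(b in B) f b < \sum_(a in A) f a.
Proof.
move=> eq_AB /set0Pn[b0 Bb0] f_dom.
have B_gt0 : 0 < #|B| by apply/card_gt0P; exists b0.
have [bm Bbm max_bm] : exists2 bm, bm \in B & forall b, b \in B -> f b <= f bm.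
  have [bm Bbm max_eq] := eq_bigmax_cond f B_gt0.
  by exists bm => // b Bb; rewrite -max_eq; apply: leq_bigmax_cond.
have le_B : \sum_(b in B) f b <= #|B| * f bm.
  by rewrite -sum_nat_const; apply: leq_sum.
have ge_A : #|A| * (f bm).+1 <= \sum_(a in A) f a.
  by rewrite -sum_nat_const; apply: leq_sum => a Aa; apply: f_dom.
rewrite eq_AB mulnS in ge_A; lia.
Qed.

Lemma leqif_sum_initial_seg (m : 'I_n -> nat) :
    (forall i j : 'I_n, i < j -> m i < m j) -> forall A : {set 'I_n},
  \sum_(i in initial_seg #|A|) m i <= \sum_(i in A) m i ?= iff (A == initial_seg #|A|).
Proof.
move=> m_incr A; set I := initial_seg #|A|.
have card_I : #|I| = #|A|.
  by rewrite card_initial_seg //; apply: leq_trans (max_card _) _; rewrite card_ord.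
have [<- | neq_AI] := eqVneq A I; first exact/leqif_refl.
rewrite (big_setID (A := I) A) (big_setID (A := A) I) /= finset.setIC.
suff lt_D : \sum_(i in I :\: A) m i < \sum_(i in A :\: I) m i.
  by split; [rewrite leq_add2l ltnW | rewrite eqn_add2l ltn_eqF].
apply: sum_lt_dominated.
- by have := cardsID A I; have := cardsID I A; rewrite finset.setIC; lia.
- apply: contra neq_AI; rewrite finset.setD_eq0 => sub_IA.
  by apply/eqP/esym/eqP; rewrite eqEcard sub_IA card_I leqnn.
- by move=> a b; rewrite !inE => /andP[a_I _] /andP[_ b_I]; apply: m_incr; lia.
Qed.

Definition initial_image s J := s @: J == initial_seg #|J|.

Lemma initial_imageP s J :
  reflect (forall a b, a \in J -> b \notin J -> s a < s b) (initial_image s J).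
Proof.
have card_sJ : #|s @: J| = #|J| by rewrite card_imset //; apply: perm_inj.
apply: (iffP eqP) => [sJ a b Ja Jb | s_sep].
  have : s a \in s @: J by apply: imset_f.
  have : s b \notin s @: J by rewrite (mem_imset _ _ (@perm_inj _ s)).
  by rewrite sJ !inE; lia.
have le_Jn : #|J| <= n by apply: leq_trans (max_card _) _; rewrite card_ord.
apply/esym/eqP; rewrite eqEcard card_sJ card_initial_seg // leqnn andbT.
apply/fintype.subsetP => x; rewrite inE => x_lt.
rewrite -[x](permKV s) (mem_imset _ _ (@perm_inj _ s)); apply: contraT => Jb.
have : #|s @: J| <= #|initial_seg x|.
  apply/subset_leq_card/fintype.subsetP => _ /imsetP[a Ja ->]; rewrite inE.
  by have := s_sep a _ Ja Jb; rewrite permKV.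
by rewrite card_sJ card_initial_seg //; lia.
Qed.

Lemma leqif_sum_image (m : 'I_n -> nat) :
    (forall i j : 'I_n, i < j -> m i < m j) -> forall s J,
  \sum_(i < n | i < #|J|) m i <= \sum_(j in J) m (s j) ?= iff initial_image s J.
Proof.
move=> m_incr s J.
have card_sJ : #|s @: J| = #|J| by rewrite card_imset //; apply: perm_inj.
have -> : \sum_(i < n | i < #|J|) m i = \sum_(i in initial_seg #|J|) m i.
  by apply: eq_bigl => i; rewrite inE.
rewrite -(big_imset _ (in2W (@perm_inj _ s))) /initial_image -card_sJ.
exact: leqif_sum_initial_seg.
Qed.

End InitialSegments.

Section Words.
Variable n : nat.
Implicit Types (w u v : seq (gen n)) (J K L : gen n) (s : 'S_n).

Definition word_vertex w s := all (fun J : gen n => initial_image s (val J)) w.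

Lemma word_vertex_cat u v s : word_vertex (u ++ v) s = word_vertex u s && word_vertex v s.
Proof. exact: all_cat. Qed.

Definition is_chain w :=
  all2rel (fun J K : gen n => (val J \subset val K) || (val K \subset val J)) w.

Lemma neq_setIl (A B : {set 'I_n}) : (A != A :&: B) = ~~ (A \subset B).
Proof. by rewrite (sameP finset.setIidPl eqP) eq_sym. Qed.

Lemma neq_setIr (A B : {set 'I_n}) : (A :&: B != B) = ~~ (B \subset A).
Proof. by rewrite (sameP finset.setIidPr eqP). Qed.

Lemma exists_gen (A : {set 'I_n}) a b : a \in A -> b \notin A -> exists J : gen n, val J = A.
Proof.
move=> Aa Ab; have A_gen : (A != finset.set0) && (A != [set: 'I_n]%SET).
  by apply/andP; split; apply/eqP => eq_A; [rewrite eq_A inE in Aa | rewrite eq_A inE in Ab].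
by exists (exist _ A A_gen).
Qed.

Lemma word_vertex_incomparable w J K s : J \in w -> K \in w ->
  ~~ (val J \subset val K) -> ~~ (val K \subset val J) -> ~~ word_vertex w s.
Proof.
move=> Jw Kw /subsetPn[a Ja Ka] /subsetPn[b Kb Jb]; apply/negP => /allP w_s.
have := initial_imageP _ _ (w_s J Jw) a b Ja Jb.
by have := initial_imageP _ _ (w_s K Kw) b a Kb Ka; lia.
Qed.

Lemma nonchain_incomparable w : ~~ is_chain w -> exists J K,
  [/\ J \in w, K \in w, ~~ (val J \subset val K) & ~~ (val K \subset val J)].
Proof.
by case/allPn => J Jw /allPn[K Kw]; rewrite negb_or => /andP[JK KJ]; exists J, K.
Qed.

Lemma nonchain_no_vertex w s : ~~ is_chain w -> ~~ word_vertex w s.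
Proof.
by case/nonchain_incomparable => J [K [Jw Kw JK KJ]]; apply: word_vertex_incomparable Jw Kw JK KJ.
Qed.

Lemma exists_nonchain : (1 < n)%N -> exists w, ~~ is_chain w.
Proof.
move=> n_gt1; pose a := Ordinal n_gt1; pose b := Ordinal (ltnW n_gt1).
have neq_ab : a != b by [].
have [Ja val_Ja] : exists Ja : gen n, val Ja = [set a]%SET.
  by apply: (exists_gen (set11 a) (b := b)); rewrite inE eq_sym.
have [Jb val_Jb] : exists Jb : gen n, val Jb = [set b]%SET.
  by apply: (exists_gen (set11 b) (b := a)); rewrite inE.
exists [:: Ja; Jb]; apply/allrelP => /(_ Ja Jb (mem_head _ _)).
rewrite !inE eqxx orbT val_Ja val_Jb !finset.sub1set !inE [b == a]eq_sym orbb.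
by rewrite (negbTE neq_ab) => /(_ isT).
Qed.

Lemma word_vertex_cong w1 w2 : word_cong w1 w2 -> word_vertex w1 =1 word_vertex w2.
Proof.
elim=> {w1 w2} [u v l r rel_lr | // | w1 w2 _ IH | w1 w2 w3 _ IH1 _ IH2] s.
- rewrite !word_vertex_cat; congr (_ && (_ && _)).
  case: rel_lr => [J | J K | J K L JK KJ]; first by rewrite /word_vertex /= andbT andbb.
    by rewrite /word_vertex /= !andbT andbC.
  rewrite neq_setIl in JK; rewrite neq_setIr in KJ.
  have no_vertex w' : J \in w' -> K \in w' -> word_vertex w' s = false.
    by move=> Jw Kw; apply/negbTE/(word_vertex_incomparable _ Jw Kw JK KJ).
  by rewrite !no_vertex ?inE ?eqxx ?orbT.
- by rewrite IH.
- by rewrite IH1 IH2.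
Qed.

End Words.

Lemma count_subpred_in (T : eqType) (p q : pred T) (s : seq T) :
  {in s, subpred p q} -> count q s = (count p s + count (predD q p) s)%N.
Proof.
move=> pq; rewrite -count_predUI.
have -> : count (predI p (predD q p)) s = 0%N.
  by rewrite (eq_count (a2 := pred0)) ?count_pred0 // => x /=; case: (p x); rewrite ?andbF.
by rewrite addn0; apply: eq_in_count => x /pq /=; case: (p x) => // ->.
Qed.

Section Chains.
Variable n : nat.
Implicit Types (w : seq (gen n)) (J K : gen n).

(* Along a chain ordered by inclusion, [miss_count w i] is the number of letters
   preceding the first one that contains [i]. *)
Definition miss_count w (i : 'I_n) := count (fun K : gen n => i \notin val K) w.

Lemma miss_count_ltP w (i j : 'I_n) :
  (miss_count w j < miss_count w i)%N -> exists2 K, K \in w & (j \in val K) && (i \notin val K).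
Proof.
move=> lt_ji; apply/hasP; apply: contraLR lt_ji => /hasPn no_K; rewrite -leqNgt.
rewrite /miss_count (@count_subpred_in _ (fun K : gen n => i \notin val K)
  (fun K : gen n => j \notin val K)) ?leq_addr //.
by move=> K /no_K; rewrite negb_and negbK => /orP[-> | ->].
Qed.

Lemma chain_miss_count_lt w K (a b : 'I_n) : is_chain w -> K \in w ->
  a \in val K -> b \notin val K -> (miss_count w a < miss_count w b)%N.
Proof.
move=> /allrelP chain Kw Ka Kb.
rewrite /miss_count (@count_subpred_in _ (fun K : gen n => a \notin val K)
  (fun K : gen n => b \notin val K)).
  rewrite -[X in (X < _)%N]addn0 ltn_add2l -has_count; apply/hasP.
  by exists K; rewrite //= Ka Kb.
move=> K' K'w /= K'a; case/orP: (chain K' K K'w Kw) => sub.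
  by apply: contra Kb => K'b; apply: (fintype.subsetP sub).
by move: K'a; rewrite (fintype.subsetP sub).
Qed.

Lemma chain_separated_mem w (A : {set 'I_n}) : is_chain w ->
    A != finset.set0 -> A != [set: 'I_n]%SET ->
    (forall j i, j \in A -> i \notin A -> (miss_count w j < miss_count w i)%N) ->
  exists2 K, K \in w & val K = A.
Proof.
move=> chain /set0Pn[j0 Aj0] /negP not_full sep.
have /subsetPn[i1 _ Ai1] : ~~ ([set: 'I_n]%SET \subset A) by rewrite finset.subTset; apply/negP.
have [i0 Ai0 min_i0] := @arg_minnP _ i1 (fun i => i \notin A) (miss_count w) Ai1.
have [K0 K0w /andP[_ K0i0]] := miss_count_ltP (sep _ _ Aj0 Ai0).
have [Ks /andP[Ksw Ksi0] max_Ks] :=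
  @arg_maxnP _ K0 (fun K => (K \in w) && (i0 \notin val K)) (fun K => #|val K|)
    (introT andP (conj K0w K0i0)).
have sub_Ks K : K \in w -> i0 \notin val K -> val K \subset val Ks.
  move=> Kw Ki0; case/orP: (allrelP chain K Ks Kw Ksw) => // sub_KsK.
  suff -> : val K = val Ks by [].
  by apply/eqP; rewrite eq_sym eqEcard sub_KsK; apply: max_Ks; rewrite Kw.
exists Ks => //; apply/eqP; rewrite finset.eqEsubset; apply/andP; split; apply/fintype.subsetP.
  move=> x Ksx; apply: contraT => Ax.
  by have := min_i0 x Ax; have := chain_miss_count_lt chain Ksw Ksx Ksi0; lia.
move=> j Aj; have [K Kw /andP[Kj Ki0]] := miss_count_ltP (sep _ _ Aj Ai0).
exact: fintype.subsetP (sub_Ks K Kw Ki0) j Kj.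
Qed.

End Chains.

#[local] Arguments wc_rel {n u v l r}.
#[local] Arguments wc_refl {n w}.
#[local] Arguments wc_sym {n w1 w2}.
#[local] Arguments wc_trans {n w1 w2 w3}.
#[local] Arguments rel_idem {n}.
#[local] Arguments rel_comm {n}.
#[local] Arguments rel_abs {n J K} L.

Section Congruence.
Variable n : nat.
Implicit Types (w u v : seq (gen n)) (x y J K L : gen n).

Lemma word_cong_cat u v w1 w2 : word_cong w1 w2 -> word_cong (u ++ w1 ++ v) (u ++ w2 ++ v).
Proof.
elim=> {w1 w2} [u' v' l r rel_lr | w | w1 w2 _ IH | w1 w2 w3 _ IH1 _ IH2].
- by rewrite !catA -!(catA _ _ v') -!(catA _ _ v); apply: wc_rel.
- exact: wc_refl.
- exact: wc_sym.
- exact: wc_trans IH1 IH2.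
Qed.

Lemma word_cong_cons x w1 w2 : word_cong w1 w2 -> word_cong (x :: w1) (x :: w2).
Proof. by move/(word_cong_cat [:: x] [::]); rewrite !cats0. Qed.

Lemma word_cong_swap x y w : word_cong (x :: y :: w) (y :: x :: w).
Proof. exact: (@wc_rel _ [::] w _ _ (rel_comm x y)). Qed.

Lemma word_cong_dup x w : x \in w -> word_cong (x :: w) w.
Proof.
elim: w => // y w IH; rewrite inE => /predU1P[-> | xw].
  exact: (@wc_rel _ [::] w _ _ (rel_idem y)).
exact: wc_trans (word_cong_swap x y w) (word_cong_cons y (IH xw)).
Qed.

Lemma word_cong_rcons x w : word_cong (x :: w) (rcons w x).
Proof.
elim: w => [|y w IH]; first exact: wc_refl.
exact: wc_trans (word_cong_swap x y w) (word_cong_cons y IH).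
Qed.

Lemma word_cong_catC u v : word_cong (u ++ v) (v ++ u).
Proof.
elim: u => [|x u IH] /=; first by rewrite cats0; apply: wc_refl.
apply: wc_trans (word_cong_cons x IH) _.
by have := word_cong_cat [::] u (word_cong_rcons x v); rewrite /= cat_rcons.
Qed.

Lemma word_cong_catl u w : {subset u <= w} -> word_cong (u ++ w) w.
Proof.
elim: u => [|x u IH] sub_uw /=; first exact: wc_refl.
have sub_u : {subset u <= w} by move=> y uy; apply: sub_uw; rewrite inE uy orbT.
by apply: wc_trans (word_cong_cons x (IH sub_u)) (word_cong_dup _); rewrite sub_uw ?mem_head.
Qed.

Lemma word_cong_mem w1 w2 : w1 =i w2 -> word_cong w1 w2.
Proof.
move=> eq_w; have sub21 : {subset w2 <= w1} by move=> x; rewrite eq_w.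
have sub12 : {subset w1 <= w2} by move=> x; rewrite eq_w.
apply: wc_trans (wc_sym (word_cong_catl sub21)) _.
exact: wc_trans (word_cong_catC _ _) (word_cong_catl sub12).
Qed.

Lemma word_cong_absorb w J K : J \in w -> K \in w ->
  ~~ (val J \subset val K) -> ~~ (val K \subset val J) -> forall u, word_cong (u ++ w) w.
Proof.
move=> Jw Kw JK KJ; elim=> [|L u IH] /=; first exact: wc_refl.
apply: wc_trans (word_cong_cons L IH) _.
have JKw : word_cong [:: J, K & w] w.
  by apply: wc_trans (word_cong_dup _) (word_cong_dup Kw); rewrite inE Jw orbT.
apply: wc_trans (wc_sym (word_cong_cons L JKw)) _.
apply: wc_trans (word_cong_swap _ _ _) _.
apply: wc_trans (word_cong_cons J (word_cong_swap _ _ _)) _.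
rewrite -neq_setIl in JK; rewrite -neq_setIr in KJ.
exact: wc_trans (wc_sym (@wc_rel _ [::] w _ _ (rel_abs L JK KJ))) JKw.
Qed.

Lemma nonchain_word_cong w1 w2 : ~~ is_chain w1 -> ~~ is_chain w2 -> word_cong w1 w2.
Proof.
move=> /nonchain_incomparable[J1 [K1 [J1w K1w JK1 KJ1]]].
move=> /nonchain_incomparable[J2 [K2 [J2w K2w JK2 KJ2]]].
pose all_gens := enum [set: gen n]%SET.
apply: wc_trans (wc_sym (word_cong_absorb J1w K1w JK1 KJ1 all_gens)) _.
apply: wc_trans (word_cong_absorb J2w K2w JK2 KJ2 all_gens).
by apply: word_cong_mem => x; rewrite !mem_cat !mem_enum finset.in_setT.
Qed.

End Congruence.

Section ConvexHull.
Variables (R : realType) (n : nat) (I : finType) (pts : I -> 'rV[R]_n).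
Implicit Types (c x : 'rV[R]_n) (delta : R).

Lemma dotvDl c1 c2 x : dotv (c1 + c2) x = dotv c1 x + dotv c2 x.
Proof. by rewrite /dotv -big_split; apply: eq_bigr => i _; rewrite mxE mulrDl. Qed.

Lemma dotv0l x : dotv 0 x = 0.
Proof. by rewrite /dotv big1 // => i _; rewrite mxE mul0r. Qed.

Lemma dotv_comb c (w : I -> R) : dotv c (\sum_i w i *: pts i) = \sum_i w i * dotv c (pts i).
Proof.
rewrite /dotv; under eq_bigr => k _ do rewrite summxE big_distrr.
rewrite exchange_big; apply: eq_bigr => i _; rewrite big_distrr.
by apply: eq_bigr => k _; rewrite mxE; exact: mulrCA.
Qed.

Lemma conv_hull_pt (A : {set I}) i : i \in A -> conv_hull R n I pts A (pts i).
Proof.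
move=> Ai; exists (fun j => (j == i)%:R); split=> [j | j Aj | |].
- by rewrite ler0n.
- by case: eqP Aj => // ->; rewrite Ai.
- by rewrite (bigD1 i) //= eqxx big1 ?addr0 // => j /negbTE ->.
- by rewrite (bigD1 i) //= eqxx scale1r big1 ?addr0 // => j /negbTE ->; rewrite scale0r.
Qed.

Lemma conv_hull_le (A : {set I}) c delta x :
  (forall i, dotv c (pts i) <= delta) -> conv_hull R n I pts A x -> dotv c x <= delta.
Proof.
move=> le_pts [w [w_ge0 _ w_sum1 ->]]; rewrite dotv_comb.
rewrite -[delta]mul1r -w_sum1 mulr_suml.
by apply: ler_sum => i _; apply: ler_wpM2l.
Qed.

Lemma conv_hull_level c delta : (forall i, dotv c (pts i) <= delta) ->
  [set x | conv_hull R n I pts [set: I]%SET x /\ dotv c x = delta] =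
  conv_hull R n I pts [set i | dotv c (pts i) == delta]%SET.
Proof.
move=> le_pts; apply/seteqP; split=> x /=.
  move=> [[w [w_ge0 _ w_sum1 ->]] at_delta]; exists w; split=> // i.
  rewrite inE => off_i.
  have gap_ge0 j : 0 <= w j * (delta - dotv c (pts j)).
    by rewrite mulr_ge0 ?subr_ge0.
  have gap_sum0 : \sum_j w j * (delta - dotv c (pts j)) = 0.
    by rewrite (eq_bigr _ (fun j _ => mulrBr _ _ _)) sumrB -mulr_suml w_sum1 mul1r
      -dotv_comb at_delta subrr.
  move: (psumr_eq0P (fun j _ => gap_ge0 j) gap_sum0 (i := i) isT) => /eqP.
  by rewrite mulf_eq0 subr_eq0 [delta == _]eq_sym (negbTE off_i) orbF => /eqP.
move=> [w [w_ge0 w_off w_sum1 ->]]; split.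
  by exists w; split=> // i; rewrite inE.
rewrite dotv_comb -[delta]mul1r -w_sum1 mulr_suml; apply: eq_bigr => i _.
have [| off_i] := boolP (i \in [set i | dotv c (pts i) == delta]%SET).
  by rewrite inE => /eqP ->.
by rewrite w_off // !mul0r.
Qed.

End ConvexHull.

Section Permutohedron.
Variables (R : realType) (n : nat) (m : 'I_n -> nat).
Hypothesis m_incr : forall i j : 'I_n, (i < j)%N -> (m i < m j)%N.
Local Notation vertex := (perm_vertex R m).
Local Notation P := (permutohedron R m).
Implicit Types (c : 'rV[R]_n) (s t : 'S_n) (w : seq (gen n)).

Definition facet_normal (J : {set 'I_n}) : 'rV[R]_n := \row_i - (i \in J)%:R.
Definition facet_level (J : {set 'I_n}) : R := - (\sum_(i < n | (i < #|J|)%N) m i)%:R.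
Definition word_normal w : 'rV[R]_n := \sum_(J <- w) facet_normal (val J).
Definition word_level w : R := \sum_(J <- w) facet_level (val J).

Lemma word_normal_cons J w : word_normal (J :: w) = facet_normal (val J) + word_normal w.
Proof. exact: big_cons. Qed.

Lemma word_level_cons J w : word_level (J :: w) = facet_level (val J) + word_level w.
Proof. exact: big_cons. Qed.

Lemma dotv_vertex c s : dotv c (vertex s) = \sum_i c 0 i * (m (s i))%:R.
Proof. by apply: eq_bigr => i _; rewrite mxE. Qed.

Lemma leif_facet J s :
  dotv (facet_normal J) (vertex s) <= facet_level J ?= iff initial_image s J.
Proof.
have -> : dotv (facet_normal J) (vertex s) = - (\sum_(j in J) m (s j))%:R.
  rewrite dotv_vertex natr_sum -sumrN [RHS]big_mkcond; apply: eq_bigr => i _.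
  by rewrite mxE; case: (i \in J); rewrite ?mulNr ?mul1r ?mul0r ?oppr0.
have [le_sum eq_sum] := leqif_sum_image m_incr s J.
by split; rewrite ?lerN2 ?eqr_opp ?ler_nat ?eqr_nat // eq_sym.
Qed.

Lemma leif_word w s :
  dotv (word_normal w) (vertex s) <= word_level w ?= iff word_vertex w s.
Proof.
elim: w => [|J w IH].
  by rewrite /word_normal /word_level !big_nil dotv0l; apply/leif_refl; exact: isT.
by rewrite word_normal_cons word_level_cons dotvDl; exact: leifD (leif_facet _ s) IH.
Qed.

Lemma facet_aE J : facet_a R m J = [set x | P x /\ dotv (facet_normal J) x = facet_level J].
Proof.
rewrite /permutohedron conv_hull_level => [|s]; last exact: (leif_facet J s).1.
congr conv_hull; apply/setP => s; rewrite !inE (leif_facet J s).2.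
by rewrite eq_sym (leqif_sum_image m_incr s J).2.
Qed.

Lemma eval_wordE w :
  eval_word R m w = [set x | P x /\ dotv (word_normal w) x = word_level w].
Proof.
elim: w => [|J w IH].
  apply/seteqP; split=> x /=; rewrite /word_normal /word_level !big_nil dotv0l //.
  by case.
rewrite /eval_word /= -/(eval_word R m w) IH facet_aE.
apply/seteqP; split=> x /=; rewrite word_normal_cons word_level_cons dotvDl.
  by move=> [[Px eq_J] [_ eq_w]]; rewrite eq_J eq_w.
move=> [Px eq_Jw].
have le_J := conv_hull_le (fun s => (leif_facet (val J) s).1) Px.
have le_w := conv_hull_le (fun s => (leif_word w s).1) Px.
by split; split=> //; apply/eqP; rewrite eq_le ?le_J ?le_w /=; lra.
Qed.

Lemma eval_word_hull w :
  eval_word R m w = conv_hull R n _ vertex [set s | word_vertex w s]%SET.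
Proof.
rewrite eval_wordE /permutohedron conv_hull_level => [|s]; last exact: (leif_word w s).1.
by congr conv_hull; apply/setP => s; rewrite !inE (leif_word w s).2.
Qed.

Lemma eval_word_vertex w s : eval_word R m w (vertex s) <-> word_vertex w s.
Proof.
rewrite eval_wordE /=; split=> [[_ /eqP] | w_s]; first by rewrite (leif_word w s).2.
by split; [apply: conv_hull_pt; rewrite finset.in_setT | apply/eqP; rewrite (leif_word w s).2].
Qed.

Lemma eval_word_is_face w : is_face P (eval_word R m w).
Proof.
exists (word_normal w), (word_level w); split; last exact: eval_wordE.
by move=> x; apply: conv_hull_le => s; apply: (leif_word w s).1.
Qed.

Definition sorts c s := forall a b, c 0 a < c 0 b -> (s a < s b)%N.

Lemma dotv_vertex_tperm c s i j : i != j ->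
  dotv c (vertex (tperm i j * s)%g) - dotv c (vertex s) =
  (c 0 j - c 0 i) * ((m (s i))%:R - (m (s j))%:R).
Proof.
move=> neq_ij; rewrite !dotv_vertex -sumrB (bigD1 i) // (bigD1 j) 1?eq_sym //=.
rewrite big1 => [|k /andP[k_j k_i]]; first by rewrite !permM tpermL tpermR; ring.
by rewrite permM tpermD 1?eq_sym // subrr.
Qed.

Lemma argmax_sorts c s : (forall t, dotv c (vertex t) <= dotv c (vertex s)) -> sorts c s.
Proof.
move=> s_max a b lt_ab; rewrite ltnNge; apply/negP => le_ba.
have neq_ab : a != b by apply: contraTneq lt_ab => ->; rewrite ltxx.
have lt_ba : (s b < s a)%N.
  by rewrite ltn_neqAle le_ba andbT (inj_eq val_inj) (inj_eq perm_inj) eq_sym.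
have := s_max (tperm a b * s)%g; rewrite -subr_le0 dotv_vertex_tperm //.
by rewrite pmulr_rle0 ?subr_gt0 // subr_le0 ler_nat leqNgt m_incr.
Qed.

Lemma exists_argmax c : exists s, forall t, dotv c (vertex t) <= dotv c (vertex s).
Proof.
have [s _ s_max] := @Order.TotalTheory.arg_maxP _ R _ 1%g xpredT
  (fun t => dotv c (vertex t)) isT.
by exists s => t; apply: s_max.
Qed.

Lemma exists_sorts c : exists s, sorts c s.
Proof. by have [s /argmax_sorts] := exists_argmax c; exists s. Qed.

Lemma sorts_sorted c s : sorts c s -> sorted <=%O [seq c 0 (s^-1 k)%g | k <- enum 'I_n].
Proof.
move=> s_sorts; rewrite sorted_map.
have : sorted (relpre (@nat_of_ord n) ltn) (enum 'I_n).
  by rewrite -sorted_map val_enum_ord iota_ltn_sorted.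
apply: sub_sorted => a b /= lt_ab; rewrite leNgt; apply/negP => /s_sorts.
by rewrite !permKV; lia.
Qed.

Lemma perm_eq_coord_map c s :
  perm_eq [seq c 0 (s^-1 k)%g | k <- enum 'I_n] [seq c 0 k | k <- enum 'I_n].
Proof.
rewrite (map_comp (c 0) (s^-1)%g); apply: perm_map; apply: uniq_perm.
- by rewrite map_inj_uniq ?enum_uniq //; apply: perm_inj.
- exact: enum_uniq.
by move=> k; rewrite mem_enum; apply/mapP; exists (s k); rewrite ?mem_enum ?permK.
Qed.

Lemma sorts_dotv_eq c s1 s2 : sorts c s1 -> sorts c s2 ->
  dotv c (vertex s1) = dotv c (vertex s2).
Proof.
move=> sorts1 sorts2.
have eq_coord :
    [seq c 0 (s1^-1 k)%g | k <- enum 'I_n] = [seq c 0 (s2^-1 k)%g | k <- enum 'I_n].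
  apply: Order.POrderTheory.le_sorted_eq; rewrite ?sorts_sorted //.
  by apply: perm_trans (perm_eq_coord_map c s1) _; rewrite perm_sym perm_eq_coord_map.
have dotvE s' : dotv c (vertex s') = \sum_k c 0 (s'^-1 k)%g * (m k)%:R.
  rewrite dotv_vertex (reindex_inj (@perm_inj _ (s'^-1)%g)).
  by apply: eq_bigr => k _; rewrite permKV.
rewrite !dotvE; apply: eq_bigr => k _.
by rewrite (iffRL (eq_in_map _ _ _) eq_coord) ?mem_enum.
Qed.

Definition level_word c : seq (gen n) :=
  pmap (fun i => insub [set j | c 0 j <= c 0 i]%SET) (enum 'I_n).

Lemma mem_level_word c K :
  K \in level_word c <-> exists i, val K = [set j | c 0 j <= c 0 i]%SET.
Proof.
rewrite mem_pmap; split=> [/mapP[i _] | [i val_K]].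
  by case: insubP => [K' _ val_K' [->] | //]; exists i.
by apply/mapP; exists i; rewrite ?mem_enum // -val_K valK.
Qed.

Lemma word_vertex_level_word c s : word_vertex (level_word c) s <-> sorts c s.
Proof.
split=> [/allP level_s a b lt_ab | s_sorts].
  have a_in : a \in [set j | c 0 j <= c 0 a]%SET by rewrite inE.
  have b_out : b \notin [set j | c 0 j <= c 0 a]%SET by rewrite inE -ltNge.
  have [K val_K] := exists_gen a_in b_out.
  have /initial_imageP : initial_image s (val K) by apply/level_s/mem_level_word; exists a.
  by apply; rewrite val_K.
apply/allP => K /mem_level_word[i ->]; apply/initial_imageP => a b.
by rewrite !inE -ltNge => le_ai lt_ib; apply: s_sorts; apply: le_lt_trans le_ai lt_ib.
Qed.

Lemma argmax_level_word c s0 : (forall t, dotv c (vertex t) <= dotv c (vertex s0)) ->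
  forall s, (dotv c (vertex s) == dotv c (vertex s0)) = word_vertex (level_word c) s.
Proof.
move=> s0_max s; apply/eqP/idP => [eq_s | /word_vertex_level_word s_sorts].
  by apply/word_vertex_level_word/argmax_sorts => t; rewrite eq_s.
exact: sorts_dotv_eq s_sorts (argmax_sorts s0_max).
Qed.

Lemma is_face_eval_word F : (1 < n)%N -> is_face P F -> exists w, eval_word R m w = F.
Proof.
move=> n_gt1 [c [delta [P_le ->]]].
have vertex_le s : dotv c (vertex s) <= delta.
  by apply: P_le; apply: conv_hull_pt; rewrite finset.in_setT.
rewrite /permutohedron conv_hull_level //.
have [/existsP[s0 /eqP s0_delta] | no_vertex] := boolP [exists s, dotv c (vertex s) == delta].
  exists (level_word c); rewrite eval_word_hull; congr conv_hull; apply/setP => s.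
  by rewrite !inE -s0_delta argmax_level_word // => t; rewrite s0_delta.
have [w nonchain_w] := exists_nonchain n_gt1.
exists w; rewrite eval_word_hull; congr conv_hull; apply/setP => s.
by rewrite !inE (negbTE (nonchain_no_vertex s nonchain_w)) (negbTE (existsPn no_vertex s)).
Qed.

(* The tie-break [i \in A] moves [A] to the end of each block of coordinates with equal
   [miss_count], so [A] can be mapped to an initial segment only if it is a union of
   whole blocks, that is, a letter of the chain. *)
Definition chain_weight w (A : {set 'I_n}) : 'rV[R]_n :=
  \row_i (2 * miss_count w i + (i \in A))%:R.

Lemma sorts_chain_weight_vertex w A s :
  is_chain w -> sorts (chain_weight w A) s -> word_vertex w s.
Proof.
move=> chain s_sorts; apply/allP => K Kw; apply/initial_imageP => a b Ka Kb.
apply: s_sorts; rewrite !mxE ltr_nat.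
by have := chain_miss_count_lt chain Kw Ka Kb; case: (a \in A); case: (b \in A); lia.
Qed.

Lemma sorts_chain_weight_mem w A s :
    is_chain w -> sorts (chain_weight w A) s -> initial_image s A ->
    A != finset.set0 -> A != [set: 'I_n]%SET ->
  exists2 K, K \in w & val K = A.
Proof.
move=> chain s_sorts /initial_imageP s_sep A_neq0 A_neqT.
apply: chain_separated_mem => // j i Aj Ai.
have : ~~ (chain_weight w A 0 i < chain_weight w A 0 j).
  by apply/negP => /s_sorts; have := s_sep j i Aj Ai; lia.
by rewrite !mxE ltr_nat Aj (negbTE Ai); lia.
Qed.

Lemma exists_word_vertex_chain w : (exists s, word_vertex w s) <-> is_chain w.
Proof.
split=> [[s w_s] | chain].
  by apply: contraLR w_s => /nonchain_no_vertex; apply.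
have [s s_sorts] := exists_sorts (chain_weight w finset.set0).
by exists s; apply: sorts_chain_weight_vertex s_sorts.
Qed.

Lemma chain_eval_word_subset w1 w2 :
  is_chain w2 -> eval_word R m w1 = eval_word R m w2 -> {subset w1 <= w2}.
Proof.
move=> chain eq_eval J Jw1; apply: contraT => Jw2.
have [s s_sorts] := exists_sorts (chain_weight w2 (val J)).
have /eval_word_vertex/allP/(_ J Jw1) s_J : eval_word R m w1 (vertex s).
  by rewrite eq_eval; apply/eval_word_vertex/(sorts_chain_weight_vertex chain s_sorts).
have /andP[J_neq0 J_neqT] := valP J.
have [K Kw2 /val_inj eq_KJ] := sorts_chain_weight_mem chain s_sorts s_J J_neq0 J_neqT.
by rewrite -eq_KJ Kw2 in Jw2.
Qed.

Lemma eval_word_cong w1 w2 : eval_word R m w1 = eval_word R m w2 <-> word_cong w1 w2.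
Proof.
split=> [eq_eval | /word_vertex_cong eq_vertex]; last first.
  by rewrite !eval_word_hull; congr conv_hull; apply/setP => s; rewrite !inE eq_vertex.
have eq_chain : is_chain w1 = is_chain w2.
  by apply/idP/idP => /exists_word_vertex_chain[s /eval_word_vertex w_s];
    apply/exists_word_vertex_chain; exists s; apply/eval_word_vertex;
    [rewrite -eq_eval | rewrite eq_eval].
have [chain1 | nonchain1] := boolP (is_chain w1); last first.
  by apply: nonchain_word_cong; rewrite -?eq_chain.
have chain2 : is_chain w2 by rewrite -eq_chain.
apply: word_cong_mem => J; apply/idP/idP.
  exact: chain_eval_word_subset.
exact: chain_eval_word_subset chain1 (esym eq_eval) J.
Qed.

End Permutohedron.

Theorem mainTheorem9 (R : realType) (d : nat) (m : 'I_d.+1 -> nat) :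
  (1 <= d)%N ->
  (forall i j : 'I_d.+1, (i < j)%N -> (m i < m j)%N) ->
  [/\ (forall w : seq (gen d.+1),
         is_face (permutohedron R m) (eval_word R m w)),
      (forall F : set 'rV[R]_d.+1, is_face (permutohedron R m) F ->
         exists w : seq (gen d.+1), eval_word R m w = F) &
      (forall w1 w2 : seq (gen d.+1),
         eval_word R m w1 = eval_word R m w2 <-> word_cong w1 w2)].
Proof.
move=> d_gt0 m_incr; split.
- exact: eval_word_is_face.
- by move=> F; apply: is_face_eval_word.
- exact: eval_word_cong.
Qed.
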